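(* Let $n\ge1$, $\rho\in\mathbb{R}$ with $3+n-3n\rho\neq0$, and let $Q_n$ be the quaternion Lie group with Lie algebra basis $e_1,\dots,e_{4n+3}$ as in the context. Let $g_0$ be a left-invariant metric diagonal in this basis with $g_j(0)=g_1(0)$ for $1\le j\le 4n$, $g_{4n+1}(0)=g_{4n+2}(0)=g_{4n+3}(0)$, and $g_1(0)^2=g_{4n+1}(0)$. Let $g(t)$ be the diagonal left-invariant metric with $g_j(t)=g_1(0)(1+ct)^{\frac{3(1-2n\rho)}{6+2n-6n\rho}}$ ($1\le j\le 4n$), $g_{4n+k}(t)=g_{4n+1}(0)(1+ct)^{\frac{-n(1+3\rho)}{3+n-3n\rho}}$ ($1\le k\le3$), $c=\frac{g_{4n+1}(0)}{g_1(0)^2}(6+2n-6n\rho)$, which is the solution of the Ricci–Bourguignon flow $\partial_tg=-2\mathrm{Ric}+2\rho Rg$ starting at $g_0$. Then $(Q_n,g_0)$ is of Heisenberg type, but the Heisenberg type property is not preserved along $g(t)$: for $t\ne0$ (with $1+ct>0$), the metric Lie algebra of $(Q_n,g(t))$ is not of Heisenberg type.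
   Context: $Q_n$ is the simply connected 2-step nilpotent Lie group whose Lie algebra has basis $X_{1l},X_{2l},X_{3l},X_{4l}$ ($1\le l\le n$), $Z_1,Z_2,Z_3$ with nonzero brackets $[X_{1l},X_{2l}]=-Z_1$, $[X_{1l},X_{3l}]=Z_3$, $[X_{1l},X_{4l}]=Z_2$, $[X_{2l},X_{3l}]=Z_2$, $[X_{2l},X_{4l}]=-Z_3$, $[X_{3l},X_{4l}]=-Z_1$; set $e_i=X_{1i}$, $e_{n+i}=X_{2i}$, $e_{2n+i}=X_{3i}$, $e_{3n+i}=X_{4i}$, $e_{4n+r}=Z_r$, and $g_\alpha=g(e_\alpha,e_\alpha)$. For a 2-step nilpotent Lie algebra with inner product, with center $\mathcal{Z}$ and $\mathcal{V}=\mathcal{Z}^\perp$, define $j(Z):\mathcal{V}\to\mathcal{V}$ for $Z\in\mathcal{Z}$ by $\langle j(Z)X,Y\rangle=\langle Z,[X,Y]\rangle$; the metric Lie algebra is of Heisenberg type if $j(Z)^2=-|Z|^2\mathrm{Id}$ for all $Z\in\mathcal{Z}$. Here $\mathcal{Z}=\mathrm{span}\{Z_1,Z_2,Z_3\}$ and $\mathcal{V}=\mathrm{span}\{e_1,\dots,e_{4n}\}$, with $j$ and norms taken with respect to $g(t)$. *)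

From HB Require Import structures.
From mathcomp Require Import all_boot all_order all_algebra.
From mathcomp Require Import reals exp.
Set Implicit Arguments. Unset Strict Implicit. Unset Printing Implicit Defensive.
Import Order.TTheory GRing.Theory Num.Theory.
Local Open Scope ring_scope.

(* The Lie algebra of Q_n has dimension 4n+3; basis e_1..e_{4n+3} is indexed
   0-based by 'I_(4n+3):  index k  <->  e_{k+1}.
   e_{i} = X_{1i}, e_{n+i} = X_{2i}, e_{2n+i} = X_{3i}, e_{3n+i} = X_{4i}
   (1 <= i <= n), e_{4n+r} = Z_r.  So 0-based index a < 4n encodes
   X_{(a %/ n)+1, (a %% n)+1}, and 0-based index 4n + r encodes Z_{r+1}. *)
Definition dimQ (n : nat) : nat := (4 * n).+3.

(* [X_{p,l}, X_{q,l}] = coef * Z_{r+1}, for types p q in {0,1,2,3}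
   (0-based: X_1..X_4), returned as (coef, r). *)
Definition qtable {R : pzRingType} (p q : nat) : R * nat :=
  match p, q with
  | 0, 1 => (-1, 0%N)   | 1, 0 => (1, 0%N)
  | 0, 2 => (1, 2%N)    | 2, 0 => (-1, 2%N)
  | 0, 3 => (1, 1%N)    | 3, 0 => (-1, 1%N)
  | 1, 2 => (1, 1%N)    | 2, 1 => (-1, 1%N)
  | 1, 3 => (-1, 2%N)   | 3, 1 => (1, 2%N)
  | 2, 3 => (-1, 0%N)   | 3, 2 => (1, 0%N)
  | _, _ => (0, 0%N)
  end.

(* structure constant: e_c-component of [e_a, e_b] (0-based indices) *)
Definition qconst {R : pzRingType} (n a b c : nat) : R :=
  if [&& (a < 4 * n)%N, (b < 4 * n)%N & (a %% n == b %% n)%N] then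
    let pr := @qtable R (a %/ n) (b %/ n) in
    if c == (4 * n + pr.2)%N then pr.1 else 0
  else 0.

Definition qvec (R : Type) (n : nat) := 'I_(dimQ n) -> R.

Definition qbr {R : pzRingType} (n : nat) (X Y : qvec R n) : qvec R n :=
  fun k => \sum_(i < dimQ n) \sum_(j < dimQ n) X i * Y j * qconst n i j k.

Definition ipg {R : pzRingType} (n : nat) (g : qvec R n) (X Y : qvec R n) : R :=
  \sum_(i < dimQ n) g i * X i * Y i.

Definition inV {R : pzRingType} (n : nat) (X : qvec R n) : Prop :=
  forall i : 'I_(dimQ n), (4 * n <= i)%N -> X i = 0.
Definition inZ {R : pzRingType} (n : nat) (X : qvec R n) : Prop :=
  forall i : 'I_(dimQ n), (i < 4 * n)%N -> X i = 0.

Definition is_jmap {R : pzRingType} (n : nat) (g : qvec R n) (Z : qvec R n)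
  (J : qvec R n -> qvec R n) : Prop :=
  (forall X, inV X -> inV (J X)) /\
  (forall X Y, inV X -> inV Y -> ipg g (J X) Y = ipg g Z (qbr X Y)).

Definition HType {R : pzRingType} (n : nat) (g : qvec R n) : Prop :=
  forall Z : qvec R n, inZ Z ->
  forall J, is_jmap g Z J ->
  forall X, inV X -> J (J X) = (fun i => - ipg g Z Z * X i).

Definition qflow {R : realType} (n : nat) (rho : R) (g0 : qvec R n) (t : R)
  : qvec R n :=
  let g1 := g0 (inord 0) in
  let gz := g0 (inord (4 * n)) in
  let nr : R := n%:R in
  let c := gz / g1 ^+ 2 * (6 + 2 * nr - 6 * nr * rho) in
  fun i => if (i < 4 * n)%N then
             g1 * powR (1 + c * t) (3 * (1 - 2 * nr * rho) / (6 + 2 * nr - 6 * nr * rho))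
           else
             gz * powR (1 + c * t) (- nr * (1 + 3 * rho) / (3 + nr - 3 * nr * rho)).

From HB Require Import structures.
From mathcomp Require Import all_boot all_order all_algebra.
From mathcomp Require Import reals exp.
From mathcomp Require Import ring zify.
From Stdlib Require Import FunctionalExtensionality.
Import Order.TTheory GRing.Theory Num.Theory.
Local Open Scope ring_scope.

(** For a metric equal to [a] on V and to [b] on the center, j(Z) is [b / a]
    times the j-map [jstd Z] of the metric with all [g_alpha = 1].  The
    matrix of [jstd Z] is block diagonal: on span{X_1l, ..., X_4l} it is
    [quat_mx z] with [z] the center coordinates of Z, a combination of three
    anticommuting complex structures (left multiplication by the imaginary
    quaternions), so [jstd Z] squares to [-|z|^2].  Hence j(Z)^2 is
    [-(b/a)^2 |z|^2] while |Z|^2 = [b |z|^2]: the metric is of Heisenberg type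
    iff [a^2 = b].  Along g(t) the ratio [a(t)^2 / b(t)] is [(1 + c t)^(2P - Q)]
    with [2P - Q = 1], which equals 1 only at [t = 0]. *)

Section StructureConstants.
Context {R : comPzRingType} {n : nat}.
Hypothesis n_gt0 : (0 < n)%N.

Definition qcoef (r p q : nat) : R :=
  if r == (@qtable R p q).2 then (@qtable R p q).1 else 0.

Definition quat_mx (z : 'I_3 -> R) : 'M[R]_4 :=
  \matrix_(p, q) \sum_(r < 3) z r * qcoef r p q.

Lemma quat_mx_sqr z : quat_mx z *m quat_mx z = - (\sum_r z r ^+ 2)%:M.
Proof.
apply/matrixP => -[[|[|[|[|p]]]] hp] [[|[|[|[|q]]]] hq] //;
  rewrite !mxE !big_ord_recl !big_ord0 !mxE !big_ord_recl !big_ord0 /qcoef /=; ring.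
Qed.

Lemma qconst_eq0 a b c :
  ~~ [&& (a < 4 * n)%N, (b < 4 * n)%N & (a %% n == b %% n)%N] ->
  @qconst R n a b c = 0.
Proof. by rewrite /qconst => /negbTE ->. Qed.

Lemma qconst_block (p q l r : nat) : (p < 4)%N -> (q < 4)%N -> (l < n)%N ->
  @qconst R n (p * n + l) (q * n + l) (4 * n + r) = qcoef r p q.
Proof.
move=> lt_p4 lt_q4 lt_ln; rewrite /qconst !modnMDl eqxx andbT.
have -> : ((p * n + l < 4 * n) && (q * n + l < 4 * n))%N by apply/andP; split; nia.
by rewrite !divnMDl // !divn_small // !addn0 eqn_add2l.
Qed.

Lemma qconst_lt_center a b c : (c < 4 * n)%N -> @qconst R n a b c = 0.
Proof. by move=> lt_c; rewrite /qconst; case: ifP => // _; case: eqP => // e; lia. Qed.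

Lemma sum_qcenter (f : 'I_(dimQ n) -> R) :
  (forall c : 'I_(dimQ n), (c < 4 * n)%N -> f c = 0) ->
  \sum_c f c = \sum_(r < 3) f (inord (4 * n + r)).
Proof.
move=> f0; rewrite /dimQ !big_ord_recr big_ord0 big1 /= => [|c _]; last first.
  by apply: f0; exact: ltn_ord c.
rewrite !add0r; congr (_ + _ + _); congr f; apply/val_inj; rewrite /= inordK //; lia.
Qed.

Lemma sum_qfiber (G : 'I_(dimQ n) -> R) (l : nat) : (l < n)%N ->
  (forall k : 'I_(dimQ n), G k != 0 -> (k < 4 * n)%N && (k %% n == l)%N) ->
  \sum_k G k = \sum_(s < 4) G (inord (s * n + l)).
Proof.
move=> lt_ln suppG; pose h (s : 'I_4) : 'I_(dimQ n) := inord (s * n + l).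
have lt_h (s : 'I_4) : (s * n + l < dimQ n)%N.
  by have := ltn_ord s; rewrite /dimQ; nia.
have h_inj : injective h.
  move=> s s' /(congr1 val); rewrite /= !inordK // => /addIn /eqP.
  by rewrite eqn_pmul2r // => /eqP /val_inj.
have -> : \sum_(s < 4) G (inord (s * n + l)) = \sum_(k <- map h (enum 'I_4)) G k.
  by rewrite big_map big_enum.
rewrite [RHS]big_uniq; last by rewrite map_inj_uniq // enum_uniq.
rewrite [RHS]big_mkcond; apply: eq_bigr => k _.
case: ifP => // /negbT kNh; apply/eqP; apply: contraR kNh => /suppG /andP[lt_k4 /eqP kl].
have lt_kn4 : (k %/ n < 4)%N by rewrite ltn_divLR // mulnC.
apply/mapP; exists (Ordinal lt_kn4); first by rewrite mem_enum.
by apply/val_inj; rewrite /h /= -kl -divn_eq inordK.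
Qed.

Lemma divn_lt4 (j : nat) : (j < 4 * n)%N -> (j %/ n < 4)%N.
Proof. by rewrite ltn_divLR // mulnC. Qed.

Definition qtype (i : nat) : 'I_4 := inord (i %/ n).

Definition jmx (Z : qvec R n) : 'M[R]_(dimQ n) :=
  \matrix_(i, k) \sum_c Z c * qconst n i k c.

Lemma jmx_eq0 Z (i k : 'I_(dimQ n)) :
  ~~ [&& (i < 4 * n)%N, (k < 4 * n)%N & (i %% n == k %% n)%N] -> jmx Z i k = 0.
Proof. by move=> blk; rewrite mxE big1 // => c _; rewrite qconst_eq0 ?mulr0. Qed.

Lemma jmx_block Z (i k : 'I_(dimQ n)) :
  (i < 4 * n)%N -> (k < 4 * n)%N -> (i %% n = k %% n)%N ->
  jmx Z i k = quat_mx (fun r => Z (inord (4 * n + r))) (qtype i) (qtype k).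
Proof.
move=> lt_i lt_k ik; rewrite !mxE (sum_qcenter _); last first.
  by move=> c lt_c; rewrite qconst_lt_center ?mulr0.
apply: eq_bigr => r _; rewrite /qtype !inordK ?divn_lt4 //.
  rewrite -(qconst_block _ _ _ r (divn_lt4 _ lt_i) (divn_lt4 _ lt_k) (ltn_pmod i n_gt0)).
  by rewrite -divn_eq ik -divn_eq.
by have := ltn_ord r; lia.
Qed.

Lemma jmx_sqr Z (i m : 'I_(dimQ n)) : inZ Z ->
  (jmx Z *m jmx Z) i m = - (\sum_c Z c ^+ 2) *+ ((i == m) && (i < 4 * n)%N).
Proof.
move=> Z_c; rewrite mxE.
have [/and3P[lt_i lt_m /eqP im] | blk] :=
  boolP [&& (i < 4 * n)%N, (m < 4 * n)%N & (i %% n == m %% n)%N]; last first.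
  suff -> : ((i == m) && (i < 4 * n)%N) = false.
    apply: big1 => k _.
    have [ik|/jmx_eq0 -> ] :=
      boolP [&& (i < 4 * n)%N, (k < 4 * n)%N & (i %% n == k %% n)%N];
      last by rewrite mul0r.
    rewrite [jmx Z k m]jmx_eq0 ?mulr0 //; apply: contra blk => /and3P[_ -> /eqP <-].
    by case/and3P: ik => -> _ ->.
  by apply/negbTE; apply: contra blk => /andP[/eqP <- ->]; rewrite eqxx.
set z := fun r : 'I_3 => Z (inord (4 * n + r)).
rewrite (sum_qfiber _ _ (ltn_pmod i n_gt0)); last first.
  move=> k; apply: contraR => nk; rewrite jmx_eq0 ?mul0r //.
  by apply: contra nk => /and3P[_ -> /eqP <-]; rewrite eqxx.
have fiber (s : 'I_4) : let k := inord (s * n + i %% n) : 'I_(dimQ n) in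
    [/\ (k < 4 * n)%N, (k %% n = i %% n)%N & qtype k = s].
  have lt_k : (s * n + i %% n < 4 * n)%N.
    by have := ltn_ord s; have := ltn_pmod i n_gt0; nia.
  have lt_kd : (s * n + i %% n < dimQ n)%N by rewrite /dimQ; lia.
  rewrite /= /qtype !inordK //; split => //.
    by rewrite modnMDl modn_mod.
  by apply/val_inj; rewrite /= inordK // divnMDl // divn_small ?ltn_pmod // addn0.
under eq_bigr => s _ do [case: (fiber s) => lt_k ki qk;
  rewrite (jmx_block _ _ _ lt_i lt_k (esym ki));
  rewrite (jmx_block _ _ _ lt_k lt_m (etrans ki im)) qk].
have -> : \sum_s quat_mx z (qtype i) s * quat_mx z s (qtype m)
          = (quat_mx z *m quat_mx z) (qtype i) (qtype m) by rewrite mxE.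
rewrite quat_mx_sqr !mxE lt_i andbT (sum_qcenter (fun c => Z c ^+ 2)); last first.
  by move=> c lt_c; rewrite Z_c // expr2 mulr0.
rewrite mulNrn; congr (_ *- nat_of_bool _) => //.
apply/idP/idP => [/eqP/(congr1 val)|/eqP -> //].
rewrite /= !inordK ?divn_lt4 // => e.
by apply/eqP/val_inj; rewrite /= (divn_eq i n) (divn_eq m n) e im.
Qed.

Definition jstd (Z X : qvec R n) : qvec R n := fun k => \sum_i X i * jmx Z i k.

Lemma jstd_inV Z X : inV (jstd Z X).
Proof.
move=> k le_k; apply: big1 => i _.
by rewrite jmx_eq0 ?mulr0 // (ltnNge k) le_k andbF.
Qed.

Lemma jstd_scale Z X a k : jstd Z (fun i => a * X i) k = a * jstd Z X k.
Proof. by rewrite /jstd mulr_sumr; apply: eq_bigr => i _; rewrite mulrA. Qed.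

Lemma jstd_adjoint Z X Y : \sum_k jstd Z X k * Y k = \sum_c Z c * qbr X Y c.
Proof.
rewrite /jstd /qbr; under eq_bigr => k _ do rewrite mulr_suml.
under [in RHS]eq_bigr => c _ do rewrite mulr_sumr.
rewrite exchange_big [in RHS]exchange_big; apply: eq_bigr => i _ /=.
under [in RHS]eq_bigr => c _ do rewrite mulr_sumr.
rewrite [in RHS]exchange_big; apply: eq_bigr => k _ /=.
by rewrite mxE mulrAC mulr_sumr; apply: eq_bigr => c _; rewrite mulrCA !mulrA.
Qed.

Lemma jstd_sqr Z X m : inZ Z -> inV X ->
  jstd Z (jstd Z X) m = - (\sum_c Z c ^+ 2) * X m.
Proof.
move=> Z_c X_V.
have -> : jstd Z (jstd Z X) m = \sum_i X i * (jmx Z *m jmx Z) i m.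
  rewrite /jstd; under eq_bigr do rewrite mulr_suml.
  rewrite exchange_big; apply: eq_bigr => i _; rewrite mxE mulr_sumr.
  by apply: eq_bigr => k _; rewrite mulrA.
under eq_bigr do rewrite jmx_sqr //.
rewrite (bigD1 m) //= eqxx [X in _ + X]big1 ?addr0 => [|i /negbTE ->]; last first.
  by rewrite mulr0.
case: (ltnP m (4 * n)) => [_ | le_m]; first by rewrite mulr1n mulrC.
by rewrite X_V // mul0r mulr0.
Qed.

Definition qbasis (k : 'I_(dimQ n)) : qvec R n := fun i => (i == k)%:R.

Lemma sum_mul_qbasis (F : qvec R n) k : \sum_i F i * qbasis k i = F k.
Proof.
rewrite (bigD1 k) //= /qbasis eqxx mulr1 big1 ?addr0 // => i /negbTE ik.
by rewrite ik mulr0.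
Qed.

End StructureConstants.

Section DiagonalMetric.
Context {R : fieldType} {n : nat} {g : qvec R n} {a b : R}.
Hypotheses (n_gt0 : (0 < n)%N) (a_neq0 : a != 0).
Hypotheses (g_V : forall k : 'I_(dimQ n), (k < 4 * n)%N -> g k = a)
           (g_Z : forall c : 'I_(dimQ n), (4 * n <= c)%N -> g c = b).

Lemma ipg_center Z W : inZ Z -> ipg g Z W = b * \sum_c Z c * W c.
Proof.
move=> Z_c; rewrite /ipg mulr_sumr; apply: eq_bigr => c _.
case: (ltnP c (4 * n)) => [lt_c | le_c]; first by rewrite Z_c // !(mulr0, mul0r).
by rewrite g_Z // mulrA.
Qed.

Lemma is_jmap_jstd Z : inZ Z -> is_jmap g Z (fun X k => b / a * jstd Z X k).
Proof.
move=> Z_c; split=> [X _ k le_k | X Y _ Y_V]; first by rewrite jstd_inV ?mulr0.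
rewrite (ipg_center _ _ Z_c) -jstd_adjoint /ipg mulr_sumr; apply: eq_bigr => k _.
case: (ltnP k (4 * n)) => [lt_k | le_k]; last by rewrite Y_V ?mulr0.
by rewrite g_V //; field.
Qed.

Lemma is_jmapE Z J X : inZ Z -> is_jmap g Z J -> inV X ->
  J X = (fun k => b / a * jstd Z X k).
Proof.
move=> Z_c [J_V J_adj] X_V; apply: functional_extensionality => k.
case: (ltnP k (4 * n)) => [lt_k | le_k]; last by rewrite J_V ?jstd_inV ?mulr0.
have ek_V : inV (qbasis k : qvec R n).
  move=> i le_i; rewrite /qbasis.
  by have /negbTE -> : i != k by apply: contraTneq le_i => ->; rewrite -ltnNge.
have := J_adj X _ X_V ek_V.
rewrite /ipg sum_mul_qbasis -/(ipg g Z _) (ipg_center _ _ Z_c) -jstd_adjoint.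
rewrite sum_mul_qbasis g_V // => e.
by apply: (mulfI a_neq0); rewrite e; field.
Qed.

Lemma is_jmap_sqr Z J X k : inZ Z -> is_jmap g Z J -> inV X ->
  J (J X) k = - ((b / a) ^+ 2 * \sum_c Z c ^+ 2) * X k.
Proof.
move=> Z_c jZ X_V; have JX_V := jZ.1 X X_V.
rewrite (is_jmapE _ _ _ Z_c jZ JX_V) (is_jmapE _ _ _ Z_c jZ X_V).
by rewrite jstd_scale jstd_sqr //; ring.
Qed.

Lemma HType_diag_iff : b != 0 -> HType g <-> a ^+ 2 = b.
Proof.
move=> b_neq0; have sum_sqr (Z : qvec R n) : \sum_c Z c ^+ 2 = \sum_c Z c * Z c.
  by apply: eq_bigr => c _; rewrite expr2.
split=> [HT | sq_ab]; last first.
  move=> Z Z_c J jZ X X_V; apply: functional_extensionality => k.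
  by rewrite (is_jmap_sqr _ _ _ _ Z_c jZ X_V) (ipg_center _ _ Z_c) sum_sqr -sq_ab; field.
pose Z : qvec R n := qbasis (inord (4 * n)).
pose X : qvec R n := qbasis (inord 0).
have Z_c : inZ Z.
  move=> i lt_i; rewrite /Z /qbasis.
  by case: eqP => // /(congr1 val); rewrite /= inordK; lia.
have X_V : inV X.
  move=> i le_i; rewrite /X /qbasis.
  by case: eqP => // /(congr1 val); rewrite /= inordK; lia.
have := is_jmap_sqr _ _ _ (inord 0) Z_c (is_jmap_jstd _ Z_c) X_V.
have /= -> := congr1 (fun f => f (inord 0)) (HT Z Z_c _ (is_jmap_jstd _ Z_c) X X_V).
rewrite (ipg_center _ _ Z_c) sum_sqr !sum_mul_qbasis.
rewrite /X /Z /qbasis !eqxx !mulr1 => /oppr_inj e.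
by apply: (mulfI b_neq0); rewrite {1}e; field.
Qed.

End DiagonalMetric.

Lemma powR_eq_base1 {R : realType} (x u v : R) :
  0 < x -> u != v -> x `^ u = x `^ v -> x = 1.
Proof.
move=> x_gt0 uv e; have : x `^ (u - v) == 1.
  rewrite powRB ?(gt_eqF x_gt0) ?implybT // e divff //.
  by rewrite (gt_eqF (powR_gt0 _ x_gt0)).
by rewrite powR_eq1 subr_eq0 (negbTE uv) ltNge (ltW x_gt0) !orbF => /eqP.
Qed.

Lemma qflow_exponents {R : numFieldType} (m rho : R) : 3 + m - 3 * m * rho != 0 ->
  3 * (1 - 2 * m * rho) / (6 + 2 * m - 6 * m * rho) * 2
  - - m * (1 + 3 * rho) / (3 + m - 3 * m * rho) = 1.
Proof.
move=> D_neq0; have -> : 6 + 2 * m - 6 * m * rho = 2 * (3 + m - 3 * m * rho) by ring.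
by field.
Qed.

Lemma qflow_not_HType (R : realType) n (rho : R) (g0 : qvec R n) t :
  (0 < n)%N -> 3 + n%:R - 3 * n%:R * rho != 0 ->
  0 < g0 (inord 0) -> 0 < g0 (inord (4 * n)) ->
  g0 (inord 0) ^+ 2 = g0 (inord (4 * n)) -> t != 0 ->
  0 < 1 + g0 (inord (4 * n)) / g0 (inord 0) ^+ 2
            * (6 + 2 * n%:R - 6 * n%:R * rho) * t ->
  ~ HType (qflow rho g0 t).
Proof.
move=> n_gt0 D_neq0 g1_gt0 gz_gt0 g_sq t_neq0.
rewrite -g_sq divff ?sqrf_eq0 ?gt_eqF // mul1r.
set c := 6 + _ - _; set F := 1 + c * t => F_gt0.
pose P := 3 * (1 - 2 * n%:R * rho) / c.
pose Q := - n%:R * (1 + 3 * rho) / (3 + n%:R - 3 * n%:R * rho).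
have flow_V (k : 'I_(dimQ n)) :
    (k < 4 * n)%N -> qflow rho g0 t k = g0 (inord 0) * F `^ P.
  by move=> lt_k; rewrite /qflow /= lt_k -g_sq divff ?sqrf_eq0 ?gt_eqF // mul1r.
have flow_Z (k : 'I_(dimQ n)) :
    (4 * n <= k)%N -> qflow rho g0 t k = g0 (inord (4 * n)) * F `^ Q.
  by move=> le_k; rewrite /qflow /= ltnNge le_k -g_sq divff ?sqrf_eq0 ?gt_eqF // mul1r.
have flow_neq0 x e : 0 < x -> x * F `^ e != 0.
  by move=> x_gt0; rewrite gt_eqF // mulr_gt0 // powR_gt0.
move/(HType_diag_iff n_gt0 (flow_neq0 _ P g1_gt0) flow_V flow_Z
        (flow_neq0 _ Q gz_gt0)).
rewrite exprMn -g_sq => /(mulfI (expf_neq0 2 (lt0r_neq0 g1_gt0))).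
have PQ : P * 2 != Q by rewrite -subr_eq0 qflow_exponents // oner_eq0.
rewrite -powR_mulrn ?powR_ge0 // -powRrM => /(powR_eq_base1 _ _ _ F_gt0 PQ) /eqP.
rewrite /F addrC -subr_eq0 addrK mulf_eq0 (negbTE t_neq0) orbF.
have -> : c = 2 * (3 + n%:R - 3 * n%:R * rho) by rewrite /c; ring.
by apply/negP; rewrite mulf_neq0 ?pnatr_eq0.
Qed.

Theorem proposition2p8 (R : realType) (n : nat) (rho : R) (g0 : qvec R n) :
  (1 <= n)%N ->
  3 + n%:R - 3 * n%:R * rho != 0 ->
  (forall i, 0 < g0 i) ->
  (forall i : 'I_(dimQ n), (i < 4 * n)%N -> g0 i = g0 (inord 0)) ->
  (forall i : 'I_(dimQ n), (4 * n <= i)%N -> g0 i = g0 (inord (4 * n))) ->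
  g0 (inord 0) ^+ 2 = g0 (inord (4 * n)) ->
  HType g0 /\
  (forall t : R, t != 0 ->
     0 < 1 + g0 (inord (4 * n)) / g0 (inord 0) ^+ 2
               * (6 + 2 * n%:R - 6 * n%:R * rho) * t ->
     ~ HType (qflow rho g0 t)).
Proof.
move=> n_gt0 D_neq0 g0_gt0 g0_V g0_Z g0_sq; split.
  by apply/(HType_diag_iff n_gt0 _ g0_V g0_Z); rewrite ?gt_eqF.
by move=> t; apply: qflow_not_HType.
Qed.
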